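(* Let $f\ge1$ and $k\ge 3$ be integers and consider the asynchronous Bullshark protocol with $n=kf+1$ validators as described in the context. If a validator $p_i$ directly commits a steady-state leader in wave $w$, then no honest validator commits (directly or indirectly) a fallback leader in wave $w$; and symmetrically, if a validator $p_i$ directly commits a fallback leader in wave $w$, then no honest validator commits (directly or indirectly) a steady-state leader in wave $w$.
   Context: Setting: $n=kf+1$ validators, at most $f$ Byzantine. All local DAGs are subsets of one common set of vertices; each vertex has a round and a source validator, and for each validator and round there is at most one vertex (no equivocation). Each validator $p_i$ keeps a local DAG $DAG_i$ closed under edges; $DAG_i[r]$ is its set of round-$r$ vertices; a path is a sequence of contiguous edges. Waves have 4 rounds, $\mathit{round}(w,j)=4(w-1)+j$. Each wave $w$ has a first steady-state leader vertex in $\mathit{round}(w,1)$, a second steady-state leader vertex in $\mathit{round}(w,3)$ (both predetermined) and a fallback leader vertex in $\mathit{round}(w,1)$ (selected by a shared coin at the end of the wave). Voting types: for each wave $w$, each validator $p_j$ whose $\mathit{round}(w,1)$ vertex exists has a voting type in $w$, either steady-state or fallback, which is a deterministic function of that vertex and its causal history; hence every validator that has $p_j$'s $\mathit{round}(w,1)$ vertex in its DAG assigns $p_j$ the same type for $w$, and all of $p_j$'s vertices in wave $w$ carry that type. A vertex votes for a leader if it has a path to it; steady-state leaders of rounds $\mathit{round}(w,1)$ and $\mathit{round}(w,3)$ are voted on by vertices of rounds $\mathit{round}(w,2)$ and $\mathit{round}(w,4)$ respectively, and the fallback leader by vertices of $\mathit{round}(w,4)$. Direct commit: $p_i$ directly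 commits a leader of wave $w$ if at least $(k-1)f+1$ vertices of the corresponding voting round in $DAG_i$ have a path to it and have the leader's type (steady-state for steady-state leaders, fallback for the fallback leader). Indirect commit: when traversing back from a directly committed vertex, a validator computes, for a candidate leader, the votes as the vertices of its voting round that are reachable from the committed vertex and have a path to the candidate; it commits a leader only if that leader has at least $(k-2)f+1$ votes of its own type while the leader of the other type has at most $f$ votes of that other type. *)

From HB Require Import structures.
From mathcomp Require Import all_boot.
Set Implicit Arguments. Unset Strict Implicit. Unset Printing Implicit Defensive.

Inductive vtyp := Steady | Fallback.
Definition vtyp_eqb (a b : vtyp) : bool :=
  match a, b with Steady, Steady | Fallback, Fallback => true | _, _ => false end.
Lemma vtyp_eqP : Equality.axiom vtyp_eqb.
Proof. by case; case; constructor. Qed.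
HB.instance Definition _ := hasDecEq.Build vtyp vtyp_eqP.

(* round(w,j) = 4(w-1)+j, waves numbered from 1. *)
Definition round_of (w j : nat) : nat := 4 * (w - 1) + j.

(* The three leader roles of a wave: first steady-state leader (round(w,1)),
   second steady-state leader (round(w,3)), fallback leader (round(w,1)). *)
Inductive role := SS1 | SS2 | FB.

Definition is_steady_role (r : role) : bool :=
  match r with FB => false | _ => true end.

Definition leader_round (w : nat) (r : role) : nat :=
  match r with SS2 => round_of w 3 | _ => round_of w 1 end.

Definition vote_round (w : nat) (r : role) : nat :=
  match r with SS1 => round_of w 2 | _ => round_of w 4 end.

Definition role_type (r : role) : vtyp :=
  match r with FB => Fallback | _ => Steady end.

Definition leader_src (n : nat) (L1 L2 F : nat -> 'I_n) (w : nat) (r : role) : 'I_n :=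
  match r with SS1 => L1 w | SS2 => L2 w | FB => F w end.

Definition is_leader_vertex (V : finType) (n : nat) (rnd : V -> nat) (src : V -> 'I_n)
  (L1 L2 F : nat -> 'I_n) (w : nat) (r : role) (v : V) : bool :=
  (rnd v == leader_round w r) && (src v == leader_src L1 L2 F w r).

Definition direct_votes (V : finType) (rnd : V -> nat) (edge : rel V) (vtype : V -> vtyp)
  (D : {set V}) (w : nat) (r : role) (v : V) : {set V} :=
  [set u in D | [&& rnd u == vote_round w r, connect edge u v & vtype u == role_type r]].

Definition direct_commits_vertex (V : finType) (n f k : nat) (rnd : V -> nat)
  (src : V -> 'I_n) (edge : rel V) (vtype : V -> vtyp) (DAG : 'I_n -> {set V})
  (L1 L2 F : nat -> 'I_n) (i : 'I_n) (w : nat) (r : role) (v : V) : Prop :=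
  [/\ v \in DAG i, is_leader_vertex rnd src L1 L2 F w r v &
      (k - 1) * f + 1 <= #|direct_votes rnd edge vtype (DAG i) w r v|].

Definition direct_commit (V : finType) (n f k : nat) (rnd : V -> nat)
  (src : V -> 'I_n) (edge : rel V) (vtype : V -> vtyp) (DAG : 'I_n -> {set V})
  (L1 L2 F : nat -> 'I_n) (i : 'I_n) (w : nat) (r : role) : Prop :=
  exists v, direct_commits_vertex f k rnd src edge vtype DAG L1 L2 F i w r v.

Definition indirect_votes (V : finType) (rnd : V -> nat) (edge : rel V) (vtype : V -> vtyp)
  (c : V) (w : nat) (r : role) (v : V) : {set V} :=
  [set u | [&& rnd u == vote_round w r, connect edge c u, connect edge u v
              & vtype u == role_type r]].

(* Indirect commit: only the necessary vote condition of the rule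
   (at least (k-2)f+1 votes of the leader's own type counted from a directly
   committed vertex) is required. *)
Definition indirect_commit (V : finType) (n f k : nat) (rnd : V -> nat)
  (src : V -> 'I_n) (edge : rel V) (vtype : V -> vtyp) (DAG : 'I_n -> {set V})
  (L1 L2 F : nat -> 'I_n) (j : 'I_n) (w : nat) (r : role) : Prop :=
  exists c w' r' v,
    [/\ direct_commits_vertex f k rnd src edge vtype DAG L1 L2 F j w' r' c,
        is_leader_vertex rnd src L1 L2 F w r v &
        (k - 2) * f + 1 <= #|indirect_votes rnd edge vtype c w r v|].

Definition commits (V : finType) (n f k : nat) (rnd : V -> nat)
  (src : V -> 'I_n) (edge : rel V) (vtype : V -> vtyp) (DAG : 'I_n -> {set V})
  (L1 L2 F : nat -> 'I_n) (j : 'I_n) (w : nat) (r : role) : Prop :=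
  direct_commit f k rnd src edge vtype DAG L1 L2 F j w r \/
  indirect_commit f k rnd src edge vtype DAG L1 L2 F j w r.

(** Every vertex that counts towards committing a leader lies in the voting
    round of that leader and carries the leader's type.  The vertices of one
    round have distinct sources (no equivocation) and a validator has a single
    type per wave, so the steady-state voters and the fallback voters of wave
    [w] come from disjoint sets of validators.  A direct commit needs
    [(k-1)f+1] voters and any commit at least [(k-2)f+1], and
    [(k-1)f+1 + (k-2)f+1 > kf+1 = n] as soon as [k >= 3]. *)
From HB Require Import structures.
From mathcomp Require Import all_boot.
From mathcomp Require Import zify.

Set Implicit Arguments.
Unset Strict Implicit.
Unset Printing Implicit Defensive.

Section VotePools.

Variables (V : finType) (n : nat) (rnd : V -> nat) (src : V -> 'I_n).
Variable vtype : V -> vtyp.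

Definition vote_pool (w : nat) (r : role) : {set V} :=
  [set u | (rnd u == vote_round w r) && (vtype u == role_type r)].

Lemma direct_votes_sub_pool (edge : rel V) (D : {set V}) w r v :
  direct_votes rnd edge vtype D w r v \subset vote_pool w r.
Proof. by apply/subsetP => u; rewrite !inE => /andP[_ /and3P[-> _ ->]]. Qed.

Lemma indirect_votes_sub_pool (edge : rel V) (c : V) w r v :
  indirect_votes rnd edge vtype c w r v \subset vote_pool w r.
Proof. by apply/subsetP => u; rewrite !inE => /and4P[-> _ _ ->]. Qed.

Lemma vote_round_in_wave w r : exists j : 'I_4, vote_round w r = round_of w j.+1.
Proof. by case: r; [exists (Ordinal (isT : 1 < 4)) | exists ord_max ..]. Qed.

Hypothesis no_equivocation : forall u v : V, rnd u = rnd v -> src u = src v -> u = v.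
Hypothesis vtype_per_wave : forall {w : nat} {j1 j2 : 'I_4} {u v : V},
  rnd u = round_of w j1.+1 -> rnd v = round_of w j2.+1 ->
  src u = src v -> vtype u = vtype v.

Lemma src_inj_vote_pool w r : {in vote_pool w r &, injective src}.
Proof.
move=> u v; rewrite !inE => /andP[/eqP ru _] /andP[/eqP rv _].
by apply: no_equivocation; rewrite ru rv.
Qed.

Lemma disjoint_vote_pool_sources w r1 r2 : role_type r1 != role_type r2 ->
  [disjoint src @: vote_pool w r1 & src @: vote_pool w r2].
Proof.
move=> type12; have [j1 rnd1] := vote_round_in_wave w r1.
have [j2 rnd2] := vote_round_in_wave w r2.
apply/pred0P => x /=; apply/negbTE/andP => -[/imsetP[u + ->] /imsetP[v + src_uv]].
rewrite !inE => /andP[/eqP ru /eqP tu] /andP[/eqP rv /eqP tv].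
rewrite rnd1 in ru; rewrite rnd2 in rv.
by move: type12; rewrite -tu -tv (vtype_per_wave ru rv src_uv) eqxx.
Qed.

Lemma card_vote_pools_le w r1 r2 : role_type r1 != role_type r2 ->
  #|vote_pool w r1| + #|vote_pool w r2| <= n.
Proof.
move=> type12.
rewrite -(card_in_imset (@src_inj_vote_pool w r1)).
rewrite -(card_in_imset (@src_inj_vote_pool w r2)).
have /eqP <- : #|src @: vote_pool w r1 :|: src @: vote_pool w r2| ==
    #|src @: vote_pool w r1| + #|src @: vote_pool w r2|.
  by rewrite (leq_card_setU _ _).2 disjoint_vote_pool_sources.
by apply: leq_trans (max_card _) _; rewrite card_ord.
Qed.

End VotePools.

Section CommitQuorums.

Variables (V : finType) (n f k : nat) (rnd : V -> nat) (src : V -> 'I_n).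
Variables (edge : rel V) (vtype : V -> vtyp) (DAG : 'I_n -> {set V}).
Variables (L1 L2 F : nat -> 'I_n).

Lemma direct_commit_vote_pool i w r :
  direct_commit f k rnd src edge vtype DAG L1 L2 F i w r ->
  (k - 1) * f + 1 <= #|vote_pool rnd vtype w r|.
Proof.
case=> v [_ _ quorum]; apply: leq_trans quorum _.
exact/subset_leq_card/direct_votes_sub_pool.
Qed.

Lemma commits_vote_pool j w r :
  commits f k rnd src edge vtype DAG L1 L2 F j w r ->
  (k - 2) * f + 1 <= #|vote_pool rnd vtype w r|.
Proof.
case=> [/direct_commit_vote_pool|[c [w' [r' [v [_ _ quorum]]]]]].
  by apply: leq_trans; rewrite leq_add2r leq_mul2r leq_sub2l ?orbT.
apply: leq_trans quorum _; exact/subset_leq_card/indirect_votes_sub_pool.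
Qed.

Hypothesis no_equivocation : forall u v : V, rnd u = rnd v -> src u = src v -> u = v.
Hypothesis vtype_per_wave : forall (w : nat) (j1 j2 : 'I_4) (u v : V),
  rnd u = round_of w j1.+1 -> rnd v = round_of w j2.+1 ->
  src u = src v -> vtype u = vtype v.

Lemma no_commit_of_other_type i j w r1 r2 : 3 <= k -> n = k * f + 1 ->
  role_type r1 != role_type r2 ->
  direct_commit f k rnd src edge vtype DAG L1 L2 F i w r1 ->
  ~ commits f k rnd src edge vtype DAG L1 L2 F j w r2.
Proof.
move=> hk def_n type12 /direct_commit_vote_pool direct /commits_vote_pool other.
have := card_vote_pools_le no_equivocation vtype_per_wave w type12.
move: direct other; rewrite def_n; nia.
Qed.

End CommitQuorums.

Theorem claim1 (f k : nat) (hf : 1 <= f) (hk : 3 <= k)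
  (V : finType) (rnd : V -> nat) (src : V -> 'I_(k * f + 1)) (edge : rel V)
  (DAG : 'I_(k * f + 1) -> {set V}) (honest : pred 'I_(k * f + 1))
  (vtype : V -> vtyp) (L1 L2 F : nat -> 'I_(k * f + 1))
  (Hbyz : #|[set i | ~~ honest i]| <= f)
  (Hnoequiv : forall u v : V, rnd u = rnd v -> src u = src v -> u = v)
  (Hclosed : forall i u v, u \in DAG i -> edge u v -> v \in DAG i)
  (Htype : forall (w : nat) (j1 j2 : 'I_4) (u v : V),
      rnd u = round_of w j1.+1 -> rnd v = round_of w j2.+1 ->
      src u = src v -> vtype u = vtype v) :
  forall (w : nat) (i : 'I_(k * f + 1)), 1 <= w ->
    (forall r, is_steady_role r ->
       direct_commit f k rnd src edge vtype DAG L1 L2 F i w r ->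
       forall j, honest j -> ~ commits f k rnd src edge vtype DAG L1 L2 F j w FB) /\
    (direct_commit f k rnd src edge vtype DAG L1 L2 F i w FB ->
       forall j r, honest j -> is_steady_role r ->
       ~ commits f k rnd src edge vtype DAG L1 L2 F j w r).
Proof.
move=> w i _.
split=> [r steady_r commit_i j _ | commit_i j r _ steady_r];
  by apply: (no_commit_of_other_type Hnoequiv Htype hk erefl _ commit_i);
     case: r steady_r commit_i.
Qed.
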